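(* If a finite symmetric subset $F\subset\mathrm{SL}_3(\mathbb{R})$ satisfies condition $(\ast)$, then $F$ freely generates a free subgroup of $\mathrm{SL}_3(\mathbb{R})$ (every reduced word $g_1\cdots g_n$, $n\ge1$, $g_i\in F$, $g_k\neq g_{k+1}^{-1}$, is non-trivial), and this subgroup is quasi-isometrically embedded in $\mathrm{SL}_3(\mathbb{R})$.
   Context: For $g\in\mathrm{SL}_3(\mathbb{R})$ and a line $L\in\mathbb{RP}^2$, $\|g|_L\|:=\|gv\|/\|v\|$ for any non-zero $v\in L$ (Euclidean norm). A finite symmetric set $F\subset\mathrm{SL}_3(\mathbb{R})$ satisfies condition $(\ast)$ if there exist $c>1$, a line $L_0\in\mathbb{RP}^2$, and for each $g\in F$ a subset $C_g\subset\mathbb{RP}^2$ such that: (i) $C_g\cap C_h=\emptyset$ if $g\ne h$; (ii) $L_0\notin\bigcup_{g\in F}C_g$; (iii) $g\cdot L_0\in C_g$ for all $g\in F$; (iv) $g\cdot C_h\subset C_g$ whenever $g\neq h^{-1}$; (v) $\|g|_L\|\ge c$ for all $L\in\bigcup_{h\ne g^{-1}}C_h$. *)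

From HB Require Import structures.
From mathcomp Require Import all_boot all_order all_algebra.
From mathcomp Require Import all_classical all_reals.
From mathcomp Require Import exp.
Set Implicit Arguments. Unset Strict Implicit. Unset Printing Implicit Defensive.
Import Order.TTheory GRing.Theory Num.Theory.
Local Open Scope ring_scope.
Local Open Scope classical_set_scope.

Section Defs.
Variable R : realType.

Definition vnorm (v : 'cV[R]_3) : R := Num.sqrt (\sum_(i < 3) v i 0 ^+ 2).

Definition SL3 (g : 'M[R]_3) : Prop := \det g = 1.

(* a set of lines of R^3 (a subset of RP^2), encoded as the set of all
   nonzero vectors spanning one of those lines: it contains only nonzero
   vectors and is invariant under nonzero scaling *)
Definition proj_set (C : set 'cV[R]_3) : Prop :=
  (forall v, C v -> v != 0) /\ (forall v (a : R), C v -> a != 0 -> C (a *: v)).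

Definition finite_symmetric_SL3 (F : set 'M[R]_3) : Prop :=
  finite_set F /\ (forall g, F g -> SL3 g) /\ (forall g, F g -> F (invmx g)).

(* condition (ast); the line L0 is given by a nonzero vector v0,
   the lines L by nonzero vectors v, and ||g|_L|| = ||g v|| / ||v|| *)
Definition condition_ast (F : set 'M[R]_3) : Prop :=
  exists (c : R) (v0 : 'cV[R]_3) (C : 'M[R]_3 -> set 'cV[R]_3),
    1 < c /\ v0 != 0 /\
        (forall g, F g -> proj_set (C g)) /\
        (forall g h, F g -> F h -> g != h -> C g `&` C h = set0) /\
        (forall g, F g -> ~ C g v0) /\
        (forall g, F g -> C g (g *m v0)) /\
        (forall g h, F g -> F h -> g != invmx h ->
           forall v, C h v -> C g (g *m v)) /\
        (forall g, F g -> forall h, F h -> h != invmx g ->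
           forall v, C h v -> c * vnorm v <= vnorm (g *m v)).

Definition word_over (F : set 'M[R]_3) (w : seq 'M[R]_3) : Prop :=
  forall g, g \in w -> F g.

Definition eval_word (w : seq 'M[R]_3) : 'M[R]_3 := \prod_(g <- w) g.

Definition reduced_word (w : seq 'M[R]_3) : Prop :=
  forall k, (k.+1 < size w)%N -> nth 0 w k != invmx (nth 0 w k.+1).

Definition freely_generates (F : set 'M[R]_3) : Prop :=
  forall w, word_over F w -> (0 < size w)%N -> reduced_word w -> eval_word w != 1.

(* the subgroup generated by the (symmetric) set F *)
Definition in_generated (F : set 'M[R]_3) (x : 'M[R]_3) : Prop :=
  exists w, word_over F w /\ eval_word w = x.

Definition word_dist (F : set 'M[R]_3) (x y : 'M[R]_3) (n : nat) : Prop :=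
  (exists w, [/\ word_over F w, size w = n & eval_word w = invmx x *m y]) /\
  (forall w, word_over F w -> eval_word w = invmx x *m y -> (n <= size w)%N).

Definition opnorm (A : 'M[R]_3) : R :=
  sup [set r | exists v : 'cV[R]_3, v != 0 /\ r = vnorm (A *m v) / vnorm v].

(* left-invariant distance on SL_3(R):
   d(g,h) = log ||g^{-1}h|| + log ||h^{-1}g||  (= log(s1/s3) of g^{-1}h);
   this (pseudo)metric is quasi-isometric to any left-invariant Riemannian
   metric on SL_3(R) *)
Definition sl3_dist (g h : 'M[R]_3) : R :=
  ln (opnorm (invmx g *m h)) + ln (opnorm (invmx h *m g)).

Definition qi_embedded (F : set 'M[R]_3) : Prop :=
  exists (lam K : R), 0 < lam /\ 0 <= K /\
    forall x y n, in_generated F x -> in_generated F y -> word_dist F x y n ->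
      n%:R / lam - K <= sl3_dist x y /\ sl3_dist x y <= lam * n%:R + K.

End Defs.

(** The ping-pong dynamics of condition (ast) make the image of [v0] under a
    reduced word [g_1 ... g_n] land in the cone [C g_1] (never containing [v0],
    so the word is not the identity) and stretch it by at least [c^(n-1)]
    (up to a constant coming from the last letter).  For a geodesic word,
    which is reduced, this bounds the operator norm of its value below by
    [c^(n-1)/M] and, by submultiplicativity, above by [M^n], where [M] bounds
    the entrywise norms of the finitely many generators.  Applied to a
    geodesic word for [x^-1 y] and to its formal inverse, a geodesic word for
    [y^-1 x], this gives the two-sided linear estimate on [sl3_dist x y]. *)
From HB Require Import structures.
From mathcomp Require Import all_boot all_order all_algebra.
From mathcomp Require Import all_classical all_reals.
From mathcomp Require Import exp lra zify.
Set Implicit Arguments. Unset Strict Implicit. Unset Printing Implicit Defensive.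
Import Order.TTheory GRing.Theory Num.Theory.
Local Open Scope ring_scope.
Local Open Scope classical_set_scope.

Section Norms.
Variable R : realType.
Implicit Types (A : 'M[R]_3) (v : 'cV[R]_3).

Definition mx_l1norm A : R := \sum_i \sum_j `|A i j|.

Lemma mx_l1norm_ge0 A : 0 <= mx_l1norm A.
Proof. by apply: sumr_ge0 => i _; apply: sumr_ge0. Qed.

Lemma vnorm_ge0 v : 0 <= vnorm v.
Proof. exact: sqrtr_ge0. Qed.

Lemma vnorm_gt0 v : v != 0 -> 0 < vnorm v.
Proof.
move=> v_neq0; have sq_ge0 i : 0 <= v i 0 ^+ 2 by rewrite sqr_ge0.
rewrite sqrtr_gt0 lt_def sumr_ge0 ?andbT //; apply: contra v_neq0.
rewrite psumr_eq0 // => /allP v0; apply/eqP/matrixP => i j.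
by rewrite ord1 mxE; apply/eqP; rewrite -sqrf_eq0; apply: v0; rewrite mem_index_enum.
Qed.

Lemma vnorm_coord_le v i : `|v i 0| <= vnorm v.
Proof.
rewrite /vnorm -sqrtr_sqr ler_wsqrtr // (bigD1 i) //= lerDl.
by apply: sumr_ge0 => j _; rewrite sqr_ge0.
Qed.

Lemma vnorm_le_l1 v : vnorm v <= \sum_i `|v i 0|.
Proof.
have l1_ge0 : 0 <= \sum_i `|v i 0| by apply: sumr_ge0.
rewrite /vnorm -(ger0_norm l1_ge0) -sqrtr_sqr ler_wsqrtr //.
rewrite !big_ord_recr /= !big_ord0 /= !add0r.
set a := v _ 0; set b := v _ 0; set d := v _ 0.
have := normr_ge0 a; have := normr_ge0 b; have := normr_ge0 d.
rewrite -(real_normK (num_real a)) -(real_normK (num_real b)).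
rewrite -(real_normK (num_real d)); nra.
Qed.

Lemma vnorm_mulmx_le A v : vnorm (A *m v) <= mx_l1norm A * vnorm v.
Proof.
apply: le_trans (vnorm_le_l1 _) _; rewrite mulr_suml; apply: ler_sum => i _.
rewrite mxE mulr_suml; apply: le_trans (ler_norm_sum _ _ _) _.
by apply: ler_sum => j _; rewrite normrM ler_wpM2l ?vnorm_coord_le.
Qed.

Let opnorm_set_neq0 A :
  [set r | exists v, v != 0 /\ r = vnorm (A *m v) / vnorm v] !=set0.
Proof.
have e_neq0 : (delta_mx 0 0 : 'cV[R]_3) != 0.
  by apply/eqP => /matrixP /(_ 0 0) /eqP; rewrite !mxE oner_eq0.
by eexists; exists (delta_mx 0 0); split; last reflexivity.
Qed.

Lemma opnorm_le A B :
  (forall v, v != 0 -> vnorm (A *m v) <= B * vnorm v) -> opnorm A <= B.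
Proof.
move=> AB; apply: ge_sup => // r [v [v_neq0 ->]].
by rewrite ler_pdivrMr ?vnorm_gt0 ?AB.
Qed.

Lemma opnorm_ge A v : v != 0 -> vnorm (A *m v) / vnorm v <= opnorm A.
Proof.
move=> v_neq0; apply: sup_upper_bound; last by exists v.
split => //; exists (mx_l1norm A) => r [u [u_neq0 ->]].
by rewrite ler_pdivrMr ?vnorm_gt0 ?vnorm_mulmx_le.
Qed.

End Norms.

Section Words.
Variable R : realType.
Implicit Types (F : set 'M[R]_3) (g : 'M[R]_3) (w : seq 'M[R]_3).

Lemma eval_word_nil : eval_word [::] = 1 :> 'M[R]_3.
Proof. by rewrite /eval_word big_nil. Qed.

Lemma eval_word_cons g w : eval_word (g :: w) = g *m eval_word w.
Proof. by rewrite /eval_word big_cons. Qed.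

Lemma eval_word_cat w1 w2 : eval_word (w1 ++ w2) = eval_word w1 *m eval_word w2.
Proof. by rewrite /eval_word big_cat. Qed.

Lemma word_over_cons F g w : word_over F (g :: w) <-> F g /\ word_over F w.
Proof.
split=> [Fgw|[Fg Fw] h]; last by rewrite inE => /predU1P [->|/Fw].
by split=> [|h hw]; apply: Fgw; rewrite inE ?eqxx ?hw ?orbT.
Qed.

Lemma reduced_word_behead g w : reduced_word (g :: w) -> reduced_word w.
Proof. by move=> red k lt_k; apply: (red k.+1). Qed.

Definition geodesic F w :=
  word_over F w /\
  forall u, word_over F u -> eval_word u = eval_word w -> (size w <= size u)%N.

Lemma word_dist_geodesic F x y n : word_dist F x y n ->
  exists w, [/\ geodesic F w, size w = n & eval_word w = invmx x *m y].
Proof.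
case=> [[w [Fw <- wxy]] minw]; exists w; split=> //; split=> // u Fu.
by rewrite wxy; apply: minw.
Qed.

Definition inv_word w := rev (map invmx w).

Lemma size_inv_word w : size (inv_word w) = size w.
Proof. by rewrite size_rev size_map. Qed.

Section UnitGenerators.
Variable F : set 'M[R]_3.
Hypothesis F_unit : forall g, F g -> g \in unitmx.

Lemma eval_word_unit w : word_over F w -> eval_word w \in unitmx.
Proof.
elim: w => [_|g w IHw /word_over_cons [Fg Fw]]; first by rewrite eval_word_nil unitmx1.
by rewrite eval_word_cons unitmx_mul F_unit ?IHw.
Qed.

Lemma geodesic_reduced w : geodesic F w -> reduced_word w.
Proof.
move=> [Fw Gw] k lt_k; apply/negP => /eqP wk_inv.
have lt_k' : (k < size w)%N by apply: ltnW.
pose u := take k w ++ drop k.+2 w.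
have Fu : word_over F u.
  by move=> g; rewrite mem_cat => /orP [/mem_take|/mem_drop]; apply: Fw.
suff /(Gw u Fu) : eval_word u = eval_word w.
  by rewrite size_cat size_take size_drop lt_k'; lia.
rewrite -[in RHS](cat_take_drop k w) (drop_nth 0 lt_k') (drop_nth 0 lt_k).
rewrite !eval_word_cat !eval_word_cons wk_inv [invmx _ *m _]mulmxA.
by rewrite mulVmx ?mul1mx //; apply/F_unit/Fw; rewrite mem_nth.
Qed.

Lemma eval_inv_word w : word_over F w -> eval_word (inv_word w) = invmx (eval_word w).
Proof.
elim: w => [_|g w IHw /word_over_cons [Fg Fw]].
  by rewrite /inv_word /= eval_word_nil -[invmx 1]/(1^-1 : 'M[R]_3) invr1.
rewrite /inv_word map_cons rev_cons -cats1 eval_word_cat.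
rewrite IHw // eval_word_cons /eval_word big_seq1.
have gU := F_unit Fg; have wU := eval_word_unit Fw.
by rewrite -[invmx (g *m _)]/((g * eval_word w)^-1) invrM.
Qed.

Hypothesis F_sym : forall g, F g -> F (invmx g).

Lemma word_over_inv_word w : word_over F w -> word_over F (inv_word w).
Proof. by move=> Fw g; rewrite mem_rev => /mapP [h /Fw Fh ->]; apply: F_sym. Qed.

Lemma geodesic_inv_word w : geodesic F w -> geodesic F (inv_word w).
Proof.
move=> [Fw Gw]; split=> [|u Fu]; first exact: word_over_inv_word.
rewrite size_inv_word -(size_inv_word u) !eval_inv_word // => eq_inv.
apply: Gw; first exact: word_over_inv_word.
by rewrite eval_inv_word // -[eval_word w]invmxK eq_inv invmxK.
Qed.

End UnitGenerators.
End Words.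

Section PingPong.
Variables (R : realType) (F : set 'M[R]_3) (c : R) (v0 : 'cV[R]_3).
Variable C : 'M[R]_3 -> set 'cV[R]_3.
Hypothesis c_ge0 : 0 <= c.
Hypothesis C_v0 : forall g, F g -> C g (g *m v0).
Hypothesis C_map : forall g h, F g -> F h -> g != invmx h ->
  forall v, C h v -> C g (g *m v).
Hypothesis C_expand : forall g, F g -> forall h, F h -> h != invmx g ->
  forall v, C h v -> c * vnorm v <= vnorm (g *m v).

Lemma pingpong g w : word_over F (g :: w) -> reduced_word (g :: w) ->
  C g (eval_word (g :: w) *m v0) /\
  c ^+ size w * vnorm (last g w *m v0) <= vnorm (eval_word (g :: w) *m v0).
Proof.
elim: w g => [|h w IHw] g /word_over_cons [Fg Fhw] red.
  by rewrite eval_word_cons eval_word_nil mulmx1 expr0 mul1r; split; [apply: C_v0|].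
have /word_over_cons [Fh _] := Fhw.
have [C_hw stretch_hw] := IHw h Fhw (reduced_word_behead red).
have gh : g != invmx h by apply: (red 0%N).
have hg : h != invmx g by apply: contra gh => /eqP ->; rewrite invmxK.
rewrite eval_word_cons -mulmxA; split; first exact: C_map C_hw.
rewrite /= exprS -mulrA; apply: le_trans (C_expand Fg Fh hg C_hw).
by apply: ler_wpM2l.
Qed.

Hypothesis v0_notin_C : forall g, F g -> ~ C g v0.

Lemma pingpong_free : freely_generates F.
Proof.
move=> [|g w] // Fw _ red; apply/eqP => w1.
have /word_over_cons [Fg _] := Fw.
by have [] := pingpong Fw red; rewrite w1 mul1mx => /(v0_notin_C Fg).
Qed.

Variable M : R.
Hypothesis M_ge1 : 1 <= M.
Hypothesis F_bounded : forall g, F g -> mx_l1norm g <= M.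

Let M_gt0 : 0 < M. Proof. exact: lt_le_trans ltr01 M_ge1. Qed.

Lemma vnorm_eval_word_le w v : word_over F w ->
  vnorm (eval_word w *m v) <= M ^+ size w * vnorm v.
Proof.
elim: w v => [|g w IHw] v; first by rewrite eval_word_nil mul1mx expr0 mul1r.
case/word_over_cons=> Fg Fw; rewrite eval_word_cons -mulmxA exprS -mulrA.
apply: le_trans (vnorm_mulmx_le _ _) _.
by apply: ler_pM; rewrite ?mx_l1norm_ge0 ?vnorm_ge0 ?F_bounded ?IHw.
Qed.

Lemma opnorm_eval_word_le w : word_over F w -> opnorm (eval_word w) <= M ^+ size w.
Proof. by move=> Fw; apply: opnorm_le => v _; apply: vnorm_eval_word_le. Qed.

Hypothesis F_unit : forall g, F g -> g \in unitmx.
Hypothesis F_sym : forall g, F g -> F (invmx g).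
Hypothesis v0_neq0 : v0 != 0.

Lemma opnorm_reduced_word_ge w : word_over F w -> reduced_word w ->
  c ^+ (size w).-1 / M <= opnorm (eval_word w).
Proof.
case: w => [|g w] Fw red; apply: le_trans (opnorm_ge _ v0_neq0).
  rewrite eval_word_nil mul1mx divff ?gt_eqF ?vnorm_gt0 // expr0 mul1r.
  by rewrite (invf_le1 M_gt0).
set h := last g w; have Fh : F h by apply: Fw; rewrite mem_last.
have v0_le : vnorm v0 <= M * vnorm (h *m v0).
  rewrite -{1}[v0]mul1mx -(mulVmx (F_unit Fh)) -mulmxA.
  apply: le_trans (vnorm_mulmx_le _ _) _.
  by apply: ler_wpM2r; [apply: vnorm_ge0 | apply/F_bounded/F_sym].
rewrite ler_pdivlMr ?vnorm_gt0 // mulrAC ler_pdivrMr //.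
apply: le_trans (ler_wpM2l (exprn_ge0 _ c_ge0) v0_le) _.
by rewrite mulrCA mulrC (ler_pM2r M_gt0); exact: (pingpong Fw red).2.
Qed.

Hypothesis c_gt1 : 1 < c.

Lemma ln_opnorm_geodesic w : geodesic F w ->
  ((size w)%:R - 1) * ln c - ln M <= ln (opnorm (eval_word w)) /\
  ln (opnorm (eval_word w)) <= (size w)%:R * ln M.
Proof.
move=> geo_w; have [Fw _] := geo_w.
have c_gt0 : 0 < c by apply: lt_trans ltr01 c_gt1.
have lb := opnorm_reduced_word_ge Fw (geodesic_reduced F_unit geo_w).
have lb_gt0 : 0 < c ^+ (size w).-1 / M by rewrite divr_gt0 ?exprn_gt0.
have opnorm_gt0 := lt_le_trans lb_gt0 lb.
split; last first.
  by rewrite mulr_natl -lnXn // ler_ln ?posrE ?exprn_gt0 ?opnorm_eval_word_le.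
apply: le_trans (_ : ln (c ^+ (size w).-1 / M) <= _); last by rewrite ler_ln ?posrE.
have pred_ge : (size w)%:R - 1 <= (size w).-1%:R :> R.
  by case: (size w) => [|n] /=; [lra | rewrite mulrSr addrK].
rewrite lnM ?posrE ?invr_gt0 ?exprn_gt0 // lnV ?posrE // lnXn // -mulr_natl.
have := ln_gt0 c_gt1; nra.
Qed.

End PingPong.

Lemma linear_bounds_sum (R : realFieldType) (a b lc lM : R) (n : R) :
  0 < lc -> 0 <= lM -> 0 <= n ->
  (n - 1) * lc - lM <= a <= n * lM -> (n - 1) * lc - lM <= b <= n * lM ->
  n / (2 * lM + lc^-1) - (2 * lc + 2 * lM) <= a + b /\
  a + b <= (2 * lM + lc^-1) * n + (2 * lc + 2 * lM).
Proof.
move=> lc_gt0 lM_ge0 n_ge0 /andP [a_lb a_ub] /andP [b_lb b_ub].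
have inv_gt0 : 0 < lc^-1 by rewrite invr_gt0.
have lam_gt0 : 0 < 2 * lM + lc^-1 by lra.
have lam_ge : 1 <= lc * (2 * lM + lc^-1).
  by rewrite mulrDr mulfV ?gt_eqF //; nra.
have n_div : n / (2 * lM + lc^-1) <= n * lc.
  by rewrite ler_pdivrMr // -mulrA; nra.
split; first nra.
have : 0 <= lc^-1 * n by apply: mulr_ge0; lra.
nra.
Qed.

Lemma finite_l1norm_bound (R : realType) (F : set 'M[R]_3) : finite_set F ->
  exists M, 1 <= M /\ forall g, F g -> mx_l1norm g <= M.
Proof.
case/finite_seqP => s ->; exists (\big[Num.max/1]_(g <- s) mx_l1norm g).
by split=> [|g gs]; [apply: bigmax_ge_id | apply: le_bigmax_seq].
Qed.

Theorem mainTheorem10 (R : realType) (F : set 'M[R]_3) :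
  finite_symmetric_SL3 F -> condition_ast F ->
  freely_generates F /\ qi_embedded F.
Proof.
move=> [finF [F_sl F_sym]] [c [v0 [C [c_gt1 [v0_neq0 [_ [_ [ii [iii [iv v]]]]]]]]]].
have c_ge0 : 0 <= c by apply: ltW (lt_trans ltr01 c_gt1).
have F_unit g : F g -> g \in unitmx by move/F_sl; rewrite unitmxE /SL3 => ->; apply: unitr1.
have [M [M_ge1 F_bounded]] := finite_l1norm_bound finF.
split; first exact: pingpong_free iii iv v ii.
have ln_bounds := ln_opnorm_geodesic c_ge0 iii iv v M_ge1 F_bounded F_unit F_sym v0_neq0 c_gt1.
exists (2 * ln M + (ln c)^-1), (2 * ln c + 2 * ln M).
have lc_gt0 : 0 < ln c by apply: ln_gt0.
have lM_ge0 : 0 <= ln M by apply: ln_ge0.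
have lc_inv_gt0 : 0 < (ln c)^-1 by rewrite invr_gt0.
split; first lra.
split; first lra.
move=> x y n [wx [Fwx <-]] [wy [Fwy <-]] /word_dist_geodesic [w [geo_w <- ew]].
have yx : invmx (eval_word wy) *m eval_word wx = eval_word (inv_word w).
  rewrite (eval_inv_word F_unit geo_w.1) ew.
  rewrite -[invmx (_ *m _)]/((eval_word wx)^-1 * eval_word wy)^-1.
  by rewrite invrM ?invrK ?unitrV ?(eval_word_unit F_unit).
rewrite /sl3_dist -ew yx; apply: linear_bounds_sum => //.
  by have [lb ub] := ln_bounds w geo_w; rewrite lb ub.
have [lb ub] := ln_bounds _ (geodesic_inv_word F_unit F_sym geo_w).
by rewrite size_inv_word in lb ub; rewrite lb ub.
Qed.
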